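(* Let $\sigma>0$ and consider any $T$-round $\sigma$-chasable Dd-MDP instance together with a finite collection $\Gamma$ of policies. Then the algorithm C\&S (run with a chasing oracle witnessing $\sigma$-chasability and an OLSC algorithm $\mathcal{A}$ with switching cost $\Delta=\sigma$) has regret with respect to $\Gamma$ at most $O\left(\sqrt{\sigma\cdot T\log|\Gamma|}\right)$.
   Context: Dynamic deterministic MDP (Dd-MDP): there is a finite state set $\mathcal{S}$, a finite action set $\mathcal{X}$, and for each $s\in\mathcal{S}$ a set $X_s\subseteq\mathcal{X}$ of feasible actions. The game lasts $T$ rounds and starts at an initial state $s_1$. In round $t$ the decision maker plays a (possibly randomized) action $x_t\in X_{s_t}$; simultaneously an adversary chooses a state transition function $g_t$ (mapping each pair $(s,x)$ with $x\in X_s$ to a state) and a reward function $f_t$ (mapping each such pair to $[0,1]$). The decision maker moves to $s_{t+1}=g_t(s_t,x_t)$, obtains reward $f_t(s_t,x_t)$, and then observes $g_t$ and $f_t$ (full information). A policy is a map $\gamma:\mathcal{S}\to\mathcal{X}$ with $\gamma(s)\in X_s$. Its simulation is $s^\gamma_1=s_1$, $x^\gamma_t=\gamma(s^\gamma_t)$, $s^\gamma_{t}=g_{t-1}(s^\gamma_{t-1},x^\gamma_{t-1})$ for $t>1$. For a finite set $\Gamma$ of policies, the regret is $\max_{\gamma\in\Gamma}\sum_{t=1}^T f_t(s^\gamma_t,x^\gamma_t)-\sum_{t=1}^T\mathbb{E}[f_t(s_t,x_t)]$. $\sigma$-chasability: the instance admits a (possibly randomized) chasing oracle such that for any target policy $\gamma\in\Gamma$,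 whenever the oracle is invoked at the beginning of some round $t_{\mathrm{init}}$ with an arbitrary initial state $s_{\mathrm{init}}\in\mathcal{S}$ (possibly different from $s^\gamma_{t_{\mathrm{init}}}$), it produces in each round $t\ge t_{\mathrm{init}}$ an action $\hat{x}(t)$ feasible for $\hat{s}(t)$, where $\hat s(t_{\mathrm{init}})=s_{\mathrm{init}}$ and $\hat s(t)=g_{t-1}(\hat s(t-1),\hat x(t-1))$, after which it is given $g_t$ and $f_t$; and for every halting round $t_{\mathrm{final}}\ge t_{\mathrm{init}}$ its chasing regret satisfies $\sum_{t=t_{\mathrm{init}}}^{t_{\mathrm{final}}} f_t(s^\gamma_t,x^\gamma_t)-\sum_{t=t_{\mathrm{init}}}^{t_{\mathrm{final}}}\mathbb{E}[f_t(\hat s(t),\hat x(t))]\le\sigma$. Online learning with switching cost (OLSC): experts form a finite set $\Gamma$; in each round $t\in[T]$ the learner picks $\gamma_t\in\Gamma$, then a reward function $F_t:\Gamma\to[0,1)$ is revealed; the regret is $\max_{\gamma\in\Gamma}\sum_t F_t(\gamma)-\big(\sum_t\mathbb{E}[F_t(\gamma_t)]-\Delta\sum_{t=2}^T\mathbb{1}[\gamma_t\ne\gamma_{t-1}]\big)$ where $\Delta>0$ is the switching cost. $\mathcal{A}$ denotes an OLSC algorithm with regret $O(\sqrt{\Delta T\log|\Gamma|})$ (such algorithms exist, e.g. follow-the-perturbed-leader). Algorithm C\&S: start at $s_1$. In each round $t$, invoke $\mathcal{A}$ to pick $\gamma_t\in\Gamma$. If $t>1$ and $\gamma_t\neq\gamma_{t-1}$,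 invoke the chasing oracle from scratch with target policy $\gamma_t$, initial round $t$ and initial state $s_t$ (in round 1 the oracle is likewise started with target $\gamma_1$ and state $s_1$); otherwise continue the current run of the oracle. Play the action $x_t$ returned by the oracle, feed the oracle $g_t,f_t$, and feed $\mathcal{A}$ the reward function $F_t(\gamma)=f_t(s^\gamma_t,x^\gamma_t)$ for all $\gamma\in\Gamma$. *)

From HB Require Import structures.
From mathcomp Require Import all_boot all_order all_algebra.
From mathcomp Require Import reals exp.
Set Implicit Arguments.
Unset Strict Implicit.
Unset Printing Implicit Defensive.
Import Order.TTheory GRing.Theory Num.Theory.
Local Open Scope ring_scope.

(* Rounds are 0-indexed: round t of the paper is round t-1 here, rounds 0..T-1. *)

(* A (finitely supported) distribution on an arbitrary type A: a list of
   (weight, outcome) pairs.  Since the horizon T and all state/action/policy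
   sets are finite, every randomized component (run against the fixed,
   oblivious adversary of the instance) induces such a distribution on its
   output sequence. *)
Definition is_dist (R : numDomainType) (A : Type) (d : seq (R * A)) : Prop :=
  all (fun p => 0 <= p.1) d /\ \sum_(p <- d) p.1 = 1.

Definition expect (R : numDomainType) (A : Type) (d : seq (R * A)) (h : A -> R) : R :=
  \sum_(p <- d) p.1 * h p.2.

Fixpoint sim (S X : Type) (g : nat -> S -> X -> S) (s1 : S) (p : S -> X) (t : nat) : S :=
  match t with
  | 0 => s1
  | t'.+1 => g t' (sim g s1 p t') (p (sim g s1 p t'))
  end.

Fixpoint run (S X : Type) (g : nat -> S -> X -> S) (t0 : nat) (s0 : S)
    (xs : nat -> X) (k : nat) : S :=
  match k with
  | 0 => s0
  | k'.+1 => g (t0 + k')%N (run g t0 s0 xs k') (xs (t0 + k')%N)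
  end.

Definition pol_reward (R : numDomainType) (S X : Type) (g : nat -> S -> X -> S)
    (f : nat -> S -> X -> R) (s1 : S) (p : S -> X) (t : nat) : R :=
  f t (sim g s1 p t) (p (sim g s1 p t)).

(* A chasing oracle: for target policy (index) gam, initial round t0 and
   initial state s0, [orc gam t0 s0] is the distribution of the sequence of
   actions it plays in rounds t0, t0+1, ... (fresh randomness per invocation).
   It witnesses sigma-chasability of the instance if, for every target in
   Gamma, every t0 < T and every s0: it is a distribution, its actions are
   feasible along the induced trajectory, and for every halting round
   t_final = t0 + n - 1 <= T - 1 its expected chasing regret is <= sigma. *)
Definition chasing_oracle_ok (R : numDomainType) (S X G : finType)
    (Xs : S -> {set X}) (T : nat) (s1 : S) (g : nat -> S -> X -> S)
    (f : nat -> S -> X -> R) (pol : G -> S -> X) (sigma : R)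
    (orc : G -> nat -> S -> seq (R * (nat -> X))) : Prop :=
  forall (gam : G) (t0 : nat) (s0 : S), (t0 < T)%N ->
    [/\ is_dist (orc gam t0 s0),
        all (fun p => (0 < p.1) ==>
               all (fun k => p.2 (t0 + k)%N \in Xs (run g t0 s0 p.2 k))
                   (iota 0 (T - t0)))
            (orc gam t0 s0)
      & forall n : nat, (0 < n)%N -> (t0 + n <= T)%N ->
          \sum_(k < n) pol_reward g f s1 (pol gam) (t0 + k)%N
          - expect (orc gam t0 s0)
              (fun xs => \sum_(k < n) f (t0 + k)%N (run g t0 s0 xs k) (xs (t0 + k)%N))
          <= sigma].

(* An OLSC algorithm over experts G: given the (oblivious) reward sequence F,
   the distribution of the sequence of chosen experts. *)
Definition reward_seq_ok (R : numDomainType) (G : Type) (T : nat)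
    (F : nat -> G -> R) : Prop :=
  forall t gam, (t < T)%N -> 0 <= F t gam <= 1.

(* causality: the joint law of the choices in rounds 0..t depends only on
   the rewards of rounds 0..t-1 *)
Definition olsc_causal (R : numDomainType) (G : finType) (T : nat)
    (A : (nat -> G -> R) -> seq (R * (nat -> G))) : Prop :=
  forall (F F' : nat -> G -> R) (t : nat), (t < T)%N ->
    (forall i gam, (i < t)%N -> F i gam = F' i gam) ->
    forall pre : nat -> G,
      expect (A F) (fun o => (all (fun i => o i == pre i) (iota 0 t.+1))%:R)
      = expect (A F') (fun o => (all (fun i => o i == pre i) (iota 0 t.+1))%:R).

Definition olsc_regret (R : numDomainType) (G : finType) (T : nat) (Delta : R)
    (A : (nat -> G -> R) -> seq (R * (nat -> G))) (F : nat -> G -> R) (gam : G) : R :=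
  \sum_(t < T) F t gam
  - expect (A F) (fun o => \sum_(t < T) F t (o t)
                           - Delta * \sum_(1 <= t < T) (o t != o t.-1)%:R).

(* Expected reward collected in rounds t, ..., t+n-1 by C&S when A's choice
   sequence is o, the state at the start of round t is s and the current
   oracle run plays the action sequence cur. *)
Fixpoint cs_val (R : numDomainType) (S X G : finType) (g : nat -> S -> X -> S)
    (f : nat -> S -> X -> R) (orc : G -> nat -> S -> seq (R * (nat -> X)))
    (o : nat -> G) (n t : nat) (s : S) (cur : nat -> X) : R :=
  match n with
  | 0 => 0
  | n'.+1 =>
    if (t == 0)%N || (o t != o t.-1) then
      \sum_(p <- orc (o t) t s)
         p.1 * (f t s (p.2 t) + cs_val g f orc o n' t.+1 (g t s (p.2 t)) p.2)
    else f t s (cur t) + cs_val g f orc o n' t.+1 (g t s (cur t)) cur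
  end.

Definition cs_feed (R : numDomainType) (S X G : finType) (g : nat -> S -> X -> S)
    (f : nat -> S -> X -> R) (s1 : S) (pol : G -> S -> X) : nat -> G -> R :=
  fun t gam => pol_reward g f s1 (pol gam) t.

Definition cs_expected_reward (R : numDomainType) (S X G : finType) (T : nat)
    (s1 : S) (g : nat -> S -> X -> S) (f : nat -> S -> X -> R) (pol : G -> S -> X)
    (orc : G -> nat -> S -> seq (R * (nat -> X)))
    (A : (nat -> G -> R) -> seq (R * (nat -> G))) : R :=
  expect (A (cs_feed g f s1 pol))
    (fun o => cs_val g f orc o T 0 s1 (fun _ => pol (o 0%N) s1)).

From HB Require Import structures.
From mathcomp Require Import all_boot all_order all_algebra.
From mathcomp Require Import reals exp.
From mathcomp Require Import lra zify.
Import Order.TTheory GRing.Theory Num.Theory.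
Set Implicit Arguments.
Unset Strict Implicit.
Local Open Scope ring_scope.

(* C&S restarts the chasing oracle in round 0 and exactly when the OLSC learner
   switches experts.  Between two restarts the learner's expert is constant, so by
   sigma-chasability the expected reward of such a block is at least that expert's
   reward minus sigma.  Summing over blocks, C&S earns at least the learner's reward
   minus sigma * (#switches + 1): its regret is at most the learner's regret with
   switching cost sigma, plus sigma, i.e. c * sqrt(sigma T ln|G|) + sigma.  Rewards
   in [0, 1] also bound the regret by T, and min(sigma, T) <= 2 sqrt(sigma T ln|G|)
   since ln|G| >= 1/2 for |G| >= 2. *)


Section Expectation.
Variables (R : numDomainType) (A : Type) (d : seq (R * A)).

Lemma expectD (h1 h2 : A -> R) :
  expect d (fun a => h1 a + h2 a) = expect d h1 + expect d h2.
Proof. by rewrite /expect -big_split; apply: eq_bigr => p _; rewrite mulrDr. Qed.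

Lemma expect_cst (c : R) : is_dist d -> expect d (fun=> c) = c.
Proof. by case=> _ d1; rewrite /expect -big_distrl /= d1 mul1r. Qed.

Lemma ler_expect (P : pred (R * A)) (h1 h2 : A -> R) : is_dist d -> all P d ->
  (forall p, P p -> 0 < p.1 -> h1 p.2 <= h2 p.2) ->
  expect d h1 <= expect d h2.
Proof.
case=> + _ + le_h; rewrite /expect; elim: d => [|p d' IH]; first by rewrite !big_nil.
rewrite !big_cons /= => /andP[p_ge0 d'_ge0] /andP[Pp Pd']; apply: lerD; last exact: IH.
move: p_ge0; rewrite le_eqVlt => /predU1P[<-|p_gt0]; first by rewrite !mul0r.
by rewrite ler_pM2l ?le_h.
Qed.

Lemma expectBr (h : A -> R) (c : R) : is_dist d ->
  expect d (fun a => h a - c) = expect d h - c.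
Proof. by move=> dd; rewrite expectD expect_cst. Qed.

End Expectation.

Lemma sum_ord_shift_split (R : nmodType) (F : nat -> R) (t j n : nat) : (j <= n)%N ->
  \sum_(k < n) F (t + k)%N =
  \sum_(k < j) F (t + k)%N + \sum_(k < n - j) F (t + j + k)%N.
Proof.
move=> jn; have [m ->] : exists m, n = (j + m)%N by exists (n - j)%N; rewrite subnKC.
rewrite addKn big_split_ord /=.
by congr (_ + _); apply: eq_bigr => k _; rewrite addnA.
Qed.

Lemma ln_ge_half (R : realType) (x : R) : 2 <= x -> 1 / 2 <= ln x.
Proof.
move=> x_ge2; have x_gt0 : 0 < x by lra.
have : ln (1 + (x^-1 - 1)) <= x^-1 - 1.
  by apply: le_ln1Dx; rewrite ltrBrDr addrC subrr invr_gt0.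
have : x^-1 <= 2^-1 by rewrite lef_pV2 ?posrE //; lra.
rewrite addrC subrK lnV ?posrE //; lra.
Qed.

Lemma minr_le_sqrt (R : rcfType) (a b L : R) : 0 <= a -> 0 <= b -> 1 / 2 <= L ->
  Num.min a b <= 2 * Num.sqrt (a * b * L).
Proof.
move=> a_ge0 b_ge0 L_ge; have ab_ge0 := mulr_ge0 a_ge0 b_ge0.
rewrite -(ler_sqr (R := R)) ?qualifE /= ?le_min ?a_ge0 ?b_ge0 ?mulr_ge0 ?sqrtr_ge0 //.
rewrite exprMn sqr_sqrtr; last by apply: mulr_ge0 => //; lra.
have : Num.min a b ^+ 2 <= a * b.
  by rewrite expr2 ler_pM ?le_min ?a_ge0 ?b_ge0 ?ge_min ?lexx ?orbT.
have : a * b <= a * b * (2 * L) by rewrite ler_peMr //; lra.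
lra.
Qed.

Definition restart (G : eqType) (o : nat -> G) (t : nat) : bool :=
  (t == 0)%N || (o t != o t.-1).

Definition restart_free (G : eqType) (o : nat -> G) (a b : nat) : Prop :=
  forall i, (a <= i < b)%N -> ~~ restart o i.

Section Restarts.
Variables (G : eqType) (o : nat -> G).

Lemma restart_free_block (t n : nat) : (0 < n)%N ->
  exists j, [/\ (0 < j <= n)%N, (j == n) || restart o (t + j)
              & restart_free o t.+1 (t + j)].
Proof.
move=> n_gt0; have Pn : exists j, (0 < j)%N && ((j == n) || restart o (t + j)).
  by exists n; rewrite n_gt0 eqxx.
case: (ex_minnP Pn) => j /andP[j_gt0 end_j] j_min.
have j_le_n : (j <= n)%N by apply: j_min; rewrite n_gt0 eqxx.
exists j; split; [by rewrite j_gt0 | done |].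
move=> i /andP[ti ij]; apply/negP => ri.
have := j_min (i - t)%N; rewrite subnKC ?(ltnW ti) // ri orbT andbT subn_gt0 ti.
by move=> /(_ isT); lia.
Qed.

Lemma restart_free_const (t j k : nat) :
  restart_free o t.+1 (t + j) -> (k < j)%N -> o (t + k)%N = o t.
Proof.
move=> free; elim: k => [|k IH] kj; first by rewrite addn0.
have : ~~ restart o (t + k.+1) by apply: free; lia.
rewrite /restart addnS /= negbK => /eqP ->; exact/IH/ltnW.
Qed.

Lemma restart_count_block (R : numDomainType) (t j : nat) :
  restart o t -> restart_free o t.+1 (t + j) -> (0 < j)%N ->
  \sum_(k < j) (restart o (t + k))%:R = 1 :> R.
Proof.
move=> rt free; case: j free => [//|j] free _.
rewrite big_ord_recl addn0 rt big1 ?addr0 // => k _.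
by rewrite lift0 (negbTE (free _ _)) //; have := ltn_ord k; lia.
Qed.

Lemma restart_count_le (R : numDomainType) (T : nat) :
  \sum_(k < T) (restart o k)%:R <= 1 + \sum_(1 <= t < T) (o t != o t.-1)%:R :> R.
Proof.
case: T => [|T]; first by rewrite big_ord0 big_geq // addr0 ler01.
rewrite big_ord_recl big_add1 big_mkord /= lerD2l.
by apply: ler_sum => k _; rewrite /bump add1n.
Qed.

End Restarts.

Lemma run_succ (S X : Type) (g : nat -> S -> X -> S) (t : nat) (s : S)
    (xs : nat -> X) (k : nat) :
  run g t s xs k.+1 = run g t.+1 (g t s (xs t)) xs k.
Proof. by elim: k => [|k /= <-]; rewrite /= ?addn0 ?addSnnS. Qed.

Definition run_reward (R : nmodType) (S X : Type) (g : nat -> S -> X -> S)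
    (f : nat -> S -> X -> R) (t : nat) (s : S) (xs : nat -> X) (n : nat) : R :=
  \sum_(k < n) f (t + k)%N (run g t s xs k) (xs (t + k)%N).

Lemma run_reward_recl (R : nmodType) (S X : Type) (g : nat -> S -> X -> S)
    (f : nat -> S -> X -> R) (t : nat) (s : S) (xs : nat -> X) (n : nat) :
  run_reward g f t s xs n.+1
  = f t s (xs t) + run_reward g f t.+1 (g t s (xs t)) xs n.
Proof.
rewrite /run_reward big_ord_recl addn0; congr (_ + _).
by apply: eq_bigr => k _; rewrite lift0 run_succ addSnnS.
Qed.

Section CSValue.
Variables (R : numDomainType) (S X G : finType) (g : nat -> S -> X -> S)
  (f : nat -> S -> X -> R) (orc : G -> nat -> S -> seq (R * (nat -> X)))
  (o : nat -> G).

Local Notation cs_val := (cs_val g f orc o).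
Local Notation run_reward := (run_reward g f).

Lemma cs_val_follow (j n t : nat) (s : S) (cur : nat -> X) :
  (j <= n)%N -> restart_free o t (t + j) ->
  cs_val n t s cur
  = run_reward t s cur j + cs_val (n - j) (t + j) (run g t s cur j) cur.
Proof.
elim: j n t s => [|j IH] n t s jn free.
  by rewrite /run_reward big_ord0 add0r subn0 addn0.
case: n jn => [//|n] jn; rewrite [LHS]/= -/(restart o t).
have /negbTE -> : ~~ restart o t by apply: free; lia.
rewrite (IH n t.+1) ?run_reward_recl ?addrA ?subSS ?addSnnS ?run_succ //.
by move=> i ti; apply: free; lia.
Qed.

Lemma cs_val_restart (j n t : nat) (s : S) (cur : nat -> X) :
  restart o t -> (0 < j <= n)%N -> restart_free o t.+1 (t + j) ->
  cs_val n t s cur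
  = expect (orc (o t) t s)
      (fun xs => run_reward t s xs j + cs_val (n - j) (t + j) (run g t s xs j) xs).
Proof.
case: j => [|j] //; case: n => [|n] // rt jn free; rewrite [LHS]/= -/(restart o t) rt.
apply: eq_bigr => p _; congr (_ * _).
by rewrite (cs_val_follow (j := j)) ?run_reward_recl ?addrA ?subSS ?addSnnS ?run_succ //.
Qed.

End CSValue.

Section ChasingBlocks.
Variables (R : numDomainType) (S X G : finType) (Xs : S -> {set X}) (T : nat)
  (s1 : S) (g : nat -> S -> X -> S) (f : nat -> S -> X -> R) (pol : G -> S -> X)
  (sigma : R) (orc : G -> nat -> S -> seq (R * (nat -> X))) (o : nat -> G).
Hypothesis chase : chasing_oracle_ok Xs T s1 g f pol sigma orc.

Lemma restart_after_block (n t j : nat) :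
  (j == n) || restart o (t + j) -> restart o (t + j) || (n - j == 0)%N.
Proof. by case/orP=> [/eqP ->|->]; rewrite ?subnn ?eqxx ?orbT. Qed.

Lemma cs_val_ge (n t : nat) (s : S) (cur : nat -> X) :
  restart o t || (n == 0)%N -> (t + n <= T)%N ->
  \sum_(k < n) pol_reward g f s1 (pol (o (t + k)%N)) (t + k)%N
  - sigma * \sum_(k < n) (restart o (t + k))%:R <= cs_val g f orc o n t s cur.
Proof.
elim/ltn_ind: n t s cur => -[|n] IH t s cur; first by rewrite !big_ord0 mulr0 subrr.
rewrite orbF => rt tnT; have tT : (t < T)%N by lia.
have [j [/andP[j_gt0 jn] end_j free]] := restart_free_block o t (ltn0Sn n).
have [dist _ regret] := chase (o t) s tT.
rewrite (cs_val_restart g f orc s cur rt _ free) ?j_gt0 // expectD.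
rewrite (sum_ord_shift_split (fun i => pol_reward g f s1 (pol (o i)) i) t jn).
rewrite (sum_ord_shift_split (fun i => (restart o i)%:R) t jn).
rewrite (restart_count_block _ rt free j_gt0) mulrDr mulr1 opprD addrACA.
apply: lerD.
  under eq_bigr => k _ do rewrite (restart_free_const free (ltn_ord k)).
  by rewrite lerBlDr -lerBlDl; apply: (regret j) => //; lia.
rewrite -[leLHS](expect_cst _ dist); apply: (ler_expect dist (all_predT _)) => p _ _.
by apply: IH; [lia | exact: restart_after_block | lia].
Qed.

Lemma cs_val_ge0 (n t : nat) (s : S) (cur : nat -> X) :
  (forall t s x, (t < T)%N -> x \in Xs s -> 0 <= f t s x) ->
  restart o t || (n == 0)%N -> (t + n <= T)%N -> 0 <= cs_val g f orc o n t s cur.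
Proof.
move=> f_ge0; elim/ltn_ind: n t s cur => -[|n] IH t s cur //.
rewrite orbF => rt tnT; have tT : (t < T)%N by lia.
have [j [/andP[j_gt0 jn] end_j free]] := restart_free_block o t (ltn0Sn n).
have [dist feasible _] := chase (o t) s tT.
rewrite (cs_val_restart g f orc s cur rt _ free) ?j_gt0 //.
rewrite -[leLHS](expect_cst _ dist); apply: (ler_expect dist feasible) => p feas_p p_gt0.
have /allP feas := implyP feas_p p_gt0.
apply: addr_ge0; last by apply: IH; [lia | exact: restart_after_block | lia].
apply: sumr_ge0 => k _; apply: f_ge0; first by have := ltn_ord k; lia.
by apply: feas; rewrite mem_iota; have := ltn_ord k; lia.
Qed.

End ChasingBlocks.

Section Regret.
Variables (R : realDomainType) (S X G : finType) (Xs : S -> {set X}) (T : nat)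
  (s1 : S) (g : nat -> S -> X -> S) (f : nat -> S -> X -> R) (pol : G -> S -> X)
  (sigma : R) (orc : G -> nat -> S -> seq (R * (nat -> X)))
  (A : (nat -> G -> R) -> seq (R * (nat -> G))).
Hypotheses (chase : chasing_oracle_ok Xs T s1 g f pol sigma orc)
  (A_dist : is_dist (A (cs_feed g f s1 pol))).

Local Notation F := (cs_feed g f s1 pol).
Local Notation V := (cs_expected_reward T s1 g f pol orc A).

Lemma cs_regret_le_olsc_regret (gam : G) : 0 <= sigma ->
  \sum_(t < T) pol_reward g f s1 (pol gam) t - V
  <= olsc_regret T sigma A F gam + sigma.
Proof.
move=> sigma_ge0.
have : expect (A F) (fun o => \sum_(t < T) F t (o t)
          - sigma * \sum_(1 <= t < T) (o t != o t.-1)%:R) - sigma <= V.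
  rewrite -expectBr //; apply: (ler_expect A_dist (all_predT _)) => -[_ o] _ _ /=.
  apply: le_trans (cs_val_ge chase _ _ _ _) => //.
  under [in leRHS]eq_bigr => k _ do rewrite add0n.
  under [X in _ <= _ - sigma * X]eq_bigr => k _ do rewrite add0n.
  have := ler_wpM2l sigma_ge0 (restart_count_le o R T); rewrite /F /cs_feed; lra.
rewrite /olsc_regret; lra.
Qed.

Lemma cs_expected_reward_ge0 :
  (forall t s x, (t < T)%N -> x \in Xs s -> 0 <= f t s x) -> 0 <= V.
Proof.
move=> f_ge0; rewrite -[leLHS](expect_cst _ A_dist).
apply: (ler_expect A_dist (all_predT _)) => o _ _.
by apply: (cs_val_ge0 chase) => //; rewrite eqxx.
Qed.

End Regret.

Lemma pol_reward_sum_le (R : numDomainType) (S X : finType) (Xs : S -> {set X})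
    (T : nat) (s1 : S) (g : nat -> S -> X -> S) (f : nat -> S -> X -> R) (p : S -> X) :
  (forall t s x, (t < T)%N -> x \in Xs s -> f t s x <= 1) ->
  (forall s, p s \in Xs s) ->
  \sum_(t < T) pol_reward g f s1 p t <= T%:R.
Proof.
move=> f_le1 p_feasible; apply: le_trans (_ : _ <= \sum_(t < T) 1) _.
  by apply: ler_sum => t _; apply: f_le1.
by rewrite sumr_const card_ord.
Qed.

Theorem theorem4 (R : realType) (c : R) (hc : 0 <= c) :
  exists C : R, 0 <= C /\
  forall (S X G : finType) (Xs : S -> {set X}) (T : nat) (s1 : S)
         (g : nat -> S -> X -> S) (f : nat -> S -> X -> R)
         (pol : G -> S -> X) (sigma : R)
         (orc : G -> nat -> S -> seq (R * (nat -> X)))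
         (A : (nat -> G -> R) -> seq (R * (nat -> G))),
    0 < sigma ->
    (forall t s x, (t < T)%N -> x \in Xs s -> 0 <= f t s x <= 1) ->
    (forall gam s, pol gam s \in Xs s) ->
    (forall gam gam', (forall s, pol gam s = pol gam' s) -> gam = gam') ->
    (2 <= #|G|)%N ->
    chasing_oracle_ok Xs T s1 g f pol sigma orc ->
    (forall F, reward_seq_ok T F -> is_dist (A F)) ->
    olsc_causal T A ->
    (forall F, reward_seq_ok T F -> forall gam : G,
        olsc_regret T sigma A F gam
          <= c * Num.sqrt (sigma * T%:R * ln (#|G|%:R))) ->
    forall gam : G,
      \sum_(t < T) pol_reward g f s1 (pol gam) t
      - cs_expected_reward T s1 g f pol orc A
      <= C * Num.sqrt (sigma * T%:R * ln (#|G|%:R)).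
Proof.
exists (c + 2); split=> [|S X G Xs T s1 g f pol sigma orc A sigma_gt0 f01 pol_feasible
  _ G_ge2 chase A_dist _ A_regret gam]; first lra.
have f_ge0 t s x (tT : (t < T)%N) (xs : x \in Xs s) := proj1 (andP (f01 t s x tT xs)).
have f_le1 t s x (tT : (t < T)%N) (xs : x \in Xs s) := proj2 (andP (f01 t s x tT xs)).
have feed_ok : reward_seq_ok T (cs_feed g f s1 pol) by move=> t gam' tT; exact: f01.
have dist := A_dist _ feed_ok.
have le_sigma := le_trans (cs_regret_le_olsc_regret chase dist gam (ltW sigma_gt0))
  (lerD (A_regret _ feed_ok gam) (lexx sigma)).
set Q := Num.sqrt _ in le_sigma *.
have Q_ge0 : 0 <= Q := sqrtr_ge0 _.
have le_T : \sum_(t < T) pol_reward g f s1 (pol gam) t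
    - cs_expected_reward T s1 g f pol orc A <= T%:R.
  have := pol_reward_sum_le s1 g f_le1 (pol_feasible gam).
  have := cs_expected_reward_ge0 chase dist f_ge0; lra.
have min_le : Num.min sigma T%:R <= 2 * Q.
  by apply: minr_le_sqrt; [exact: ltW | exact: ler0n | apply: ln_ge_half; rewrite ler_nat].
have cQ_ge0 := mulr_ge0 hc Q_ge0.
by move: min_le; rewrite ge_min => /orP[] ?; lra.
Qed.
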